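(* In the configuration described in the context, suppose $R_1>R_2$ are positive integers. Then the three lengths $T_1T_2$, $C_1M$, $C_2M$ are all integers if and only if there exist positive integers $\delta, r_1, r_2, r_3$ with $\gcd(r_1,r_2)=1$ and $r_1^2+r_2^2=r_3^2$ such that $R_1=\delta r_1^2$ and $R_2=\delta r_2^2$ (necessarily $r_1>r_2$). In that case $T_1T_2 = 2\delta r_1r_2$, $IM=T_1M=T_2M=\delta r_1 r_2$, $C_1M=\delta r_1r_3$, $C_2M=\delta r_2 r_3$, and the lengths $T_1I = \frac{2\delta r_2r_1^2}{r_3}$, $T_2I=\frac{2\delta r_1r_2^2}{r_3}$, $C_1M_1=\frac{\delta r_1^3}{r_3}$, $C_2M_2=\frac{\delta r_2^3}{r_3}$, $M_1M = \frac{\delta r_1r_2^2}{r_3}$, $M_2M=\frac{\delta r_2r_1^2}{r_3}$, $C_2K=\frac{\delta r_2^2r_3^2}{r_1^2-r_2^2}$, $T_2K=\frac{2\delta r_2^3r_1}{r_1^2-r_2^2}$, $C_1K=\frac{\delta r_1^2r_3^2}{r_1^2-r_2^2}$, $T_1K=\frac{2\delta r_1^3r_2}{r_1^2-r_2^2}$ are rational.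
   Context: Configuration: two circles in the plane with centers $C_1,C_2$ and radii $R_1>R_2>0$, externally tangent at the point $I$ (so $I$ lies on segment $C_1C_2$ and $C_1C_2=R_1+R_2$). Let a common external tangent line touch the first circle at $T_1$ and the second circle at $T_2$ (both circles on the same side of line $T_1T_2$). Let $M$ be the midpoint of segment $T_1T_2$; equivalently, $M$ is the point where the common tangent line at $I$ (the line through $I$ perpendicular to $C_1C_2$) meets $T_1T_2$. Let $M_1$ be the midpoint of segment $T_1I$ (which is the intersection point of segment $C_1M$ with $T_1I$, the foot of the perpendicular from $C_1$ to $T_1I$), and $M_2$ the midpoint of segment $T_2I$ (the intersection of $C_2M$ with $T_2I$). Since $R_1>R_2$, the lines $T_1T_2$ and $C_1C_2$ meet at a point $K$, lying beyond $C_2$ on ray $C_1C_2$ and beyond $T_2$ on ray $T_1T_2$. For points $X,Y$, $XY$ denotes the length of segment $\overline{XY}$. *)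

From Stdlib Require Import Reals Lra Lia ZArith Arith.
Open Scope R_scope.

Definition point : Type := (R * R)%type.

Definition pdist (X Y : point) : R :=
  sqrt ((fst X - fst Y) ^ 2 + (snd X - snd Y) ^ 2).

Definition dotv (A B C D : point) : R :=
  (fst B - fst A) * (fst D - fst C) + (snd B - snd A) * (snd D - snd C).

(* Cross product of vectors (B - A) and (C - A): zero iff A, B, C collinear. *)
Definition cross (A B C : point) : R :=
  (fst B - fst A) * (snd C - snd A) - (snd B - snd A) * (fst C - fst A).

Definition midpoint (A B : point) : point :=
  ((fst A + fst B) / 2, (snd A + snd B) / 2).

Definition is_integer (x : R) : Prop := exists n : Z, x = IZR n.

Definition is_rational (x : R) : Prop :=
  exists p q : Z, q <> 0%Z /\ x = IZR p / IZR q.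

Definition config (Rad1 Rad2 : R) (C1 C2 I T1 T2 M M1 M2 K : point) : Prop :=
  0 < Rad2 /\ Rad2 < Rad1 /\
  (* externally tangent circles, tangent at I *)
  pdist C1 C2 = Rad1 + Rad2 /\ pdist C1 I = Rad1 /\ pdist C2 I = Rad2 /\
  pdist C1 T1 = Rad1 /\ pdist C2 T2 = Rad2 /\
  (* line T1T2 is tangent to both circles at T1 and T2 *)
  T1 <> T2 /\ dotv T1 T2 T1 C1 = 0 /\ dotv T1 T2 T2 C2 = 0 /\
  (* both circles on the same side of T1T2 (external tangent) *)
  dotv T1 C1 T2 C2 > 0 /\
  M = midpoint T1 T2 /\ M1 = midpoint T1 I /\ M2 = midpoint T2 I /\
  (* K is the intersection of lines T1T2 and C1C2 *)
  cross T1 T2 K = 0 /\ cross C1 C2 K = 0.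

From Stdlib Require Import Reals Lra Lia Psatz ZArith Arith.
Open Scope R_scope.

(* Put [u = C2 - C1] and [p = T2 - C2] (the radius to [T2]).  The
   configuration is rigid: [I], [T1], [T2], [K] are the affine combinations
   [C1 + r/(r+q) u], [C1 + (r/q) p], [C1 + u + p], [C1 + r/(r-q) u], and the
   Gram data are [|u|^2 = (r+q)^2], [|p|^2 = q^2], [u.p = q(r-q)].  These
   follow from the equality cases of Cauchy-Schwarz (for [I] and [T1]) and
   from uniqueness of the intersection of two non-parallel lines (for [K]).
   Hence every length of the figure is the square root of an explicit
   rational function of [r] and [q] ([config_distances]); e.g.
   [T1T2 = sqrt (4 r q)] and [C1M = sqrt (r (r + q))]. For natural radii, integrality of [T1T2] and [C1M] means that
   [4 R1 R2] and [R1 (R1 + R2)] are squares; a gcd argument then gives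
   [R1 = d r1^2], [R2 = d r2^2] with [r1^2 + r2^2] a square
   ([pythagorean_radii]).  Conversely, for such radii all radicands are
   squares of the rational expressions of the theorem
   ([config_pythagorean_lengths]), which are visibly rational. *)

Section Squares.
Local Open Scope nat_scope.

Lemma coprime_square (a b : nat) : Nat.gcd a b = 1 -> Nat.gcd a (b * b) = 1.
Proof.
  intros Hab.
  set (g := Nat.gcd a (b * b)).
  assert (Hga : Nat.divide g a) by apply Nat.gcd_divide_l.
  assert (Hgbb : Nat.divide g (b * b)) by apply Nat.gcd_divide_r.
  assert (Hgb : Nat.gcd g b = 1).
  { apply Nat.divide_1_r; rewrite <- Hab; apply Nat.gcd_greatest.
    - eapply Nat.divide_trans; [apply Nat.gcd_divide_l | exact Hga].
    - apply Nat.gcd_divide_r. }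
  assert (Hg_b : Nat.divide g b) by (eapply Nat.gauss; eauto).
  apply Nat.divide_1_r; rewrite <- Hab; now apply Nat.gcd_greatest.
Qed.

Lemma gcd_cofactors (m n : nat) : 0 < m ->
  exists g a b, 0 < g /\ m = a * g /\ n = b * g /\ Nat.gcd a b = 1.
Proof.
  intros Hm.
  set (g := Nat.gcd m n).
  assert (Hg : g <> 0) by (unfold g; intro E; apply Nat.gcd_eq_0 in E; lia).
  destruct (Nat.gcd_divide_l m n) as [a Ha].
  destruct (Nat.gcd_divide_r m n) as [b Hb].
  exists g, a, b; repeat split; auto; try lia.
  replace a with (m / g) by (rewrite Ha; now rewrite Nat.div_mul).
  replace b with (n / g) by (rewrite Hb; now rewrite Nat.div_mul).
  now apply Nat.gcd_div_gcd.
Qed.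

Lemma square_cofactor (x P t : nat) : 0 < x -> P * P = x * x * t ->
  exists p, t = p * p.
Proof.
  intros Hx HP.
  destruct (gcd_cofactors x P Hx) as (h & q & p & Hh & Hq & Hp & Hqp).
  assert (Hsq : p * p = q * q * t).
  { subst; apply (Nat.mul_cancel_l _ _ (h * h)); nia. }
  assert (Hq1 : q = 1).
  { apply Nat.divide_1_r; rewrite <- (coprime_square q p Hqp).
    apply Nat.gcd_greatest; [apply Nat.divide_refl | exists (q * t); lia]. }
  exists p; lia.
Qed.

Lemma square_product_decomposition (R1 R2 m : nat) : 0 < R1 ->
  R1 * R2 = m * m ->
  exists d a b, Nat.gcd a b = 1 /\ R1 = d * (a * a) /\ R2 = d * (b * b).
Proof.
  intros HR1 Hm.
  destruct (gcd_cofactors R1 m HR1) as (g & a & b & Hg & Ha & Hb & Hab).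
  assert (Hsq : a * R2 = g * (b * b)).
  { apply (Nat.mul_cancel_l _ _ g); [lia | subst; nia]. }
  assert (Hdiv : Nat.divide a (b * b * g)) by (exists R2; lia).
  apply Nat.gauss in Hdiv; [| now apply coprime_square].
  destruct Hdiv as [d Hd].
  assert (Ha0 : a <> 0) by (intro E; subst; lia).
  exists d, a, b; repeat split; auto.
  - subst; lia.
  - apply (Nat.mul_cancel_l _ _ a); auto; rewrite Hsq, Hd; lia.
Qed.

(* Write [R1 R2 = m^2]; then [R1 (R1 + R2) = (d r1)^2 (r1^2 + r2^2)]. *)
Lemma pythagorean_radii (R1 R2 N P : nat) : 0 < R1 -> 0 < R2 ->
  4 * R1 * R2 = N * N -> R1 * (R1 + R2) = P * P ->
  exists d r1 r2 r3 : nat,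
    0 < d /\ 0 < r1 /\ 0 < r2 /\ 0 < r3 /\
    Nat.gcd r1 r2 = 1 /\ r1 ^ 2 + r2 ^ 2 = r3 ^ 2 /\
    R1 = d * r1 ^ 2 /\ R2 = d * r2 ^ 2.
Proof.
  intros HR1 HR2 HN HP.
  assert (HNeven : Nat.Even N).
  { apply Nat.even_spec.
    assert (E : Nat.even (N * N) = true)
      by (rewrite <- HN, <- Nat.mul_assoc, Nat.even_mul; reflexivity).
    now rewrite Nat.even_mul, Bool.orb_diag in E. }
  destruct HNeven as [m Hm]; subst N.
  destruct (square_product_decomposition R1 R2 m HR1 ltac:(nia))
    as (d & a & b & Hab & HR1d & HR2d).
  assert (Hd : 0 < d) by (destruct d; lia).
  assert (Ha : 0 < a) by (destruct a; lia).
  assert (Hb : 0 < b) by (destruct b; lia).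
  destruct (square_cofactor (d * a) P (a * a + b * b) ltac:(nia))
    as [c Hc]; [rewrite <- HP, HR1d, HR2d; nia |].
  exists d, a, b, c; rewrite !Nat.pow_2_r; repeat split; try lia.
Qed.

End Squares.

Definition dot (u v : R * R) : R := fst u * fst v + snd u * snd v.
Definition det (u v : R * R) : R := fst u * snd v - snd u * fst v.
Definition scale (k : R) (v : R * R) : R * R := (k * fst v, k * snd v).
Definition vec (A B : point) : R * R := (fst B - fst A, snd B - snd A).
Definition affine (O : point) (a b : R) (u v : R * R) : point :=
  (fst O + a * fst u + b * fst v, snd O + a * snd u + b * snd v).

Lemma lagrange_identity (u v : R * R) : dot u v ^ 2 + det u v ^ 2 = dot u u * dot v v.
Proof. unfold dot, det; ring. Qed.

Lemma sum_squares_zero (x y : R) : x ^ 2 + y ^ 2 = 0 -> x = 0 /\ y = 0.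
Proof. intros H; split; nra. Qed.

Lemma cauchy_schwarz_equality (u v : R * R) (r q : R) : 0 < q ->
  dot u u = r ^ 2 -> dot v v = q ^ 2 -> dot u v = r * q -> u = scale (r / q) v.
Proof.
  destruct u as [ux uy], v as [vx vy]; unfold dot, scale; simpl.
  intros Hq Hu Hv Huv.
  assert (H0 : (q * ux - r * vx) ^ 2 + (q * uy - r * vy) ^ 2 = 0).
  { replace ((q * ux - r * vx) ^ 2 + (q * uy - r * vy) ^ 2)
      with (q ^ 2 * (ux * ux + uy * uy) - 2 * q * r * (ux * vx + uy * vy)
            + r ^ 2 * (vx * vx + vy * vy)) by ring.
    rewrite Hu, Hv, Huv; ring. }
  apply sum_squares_zero in H0 as [Hx Hy].
  f_equal; apply (Rmult_eq_reg_l q); try lra; field_simplify; lra.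
Qed.

Lemma det_zero_of_common_normal (n e p : R * R) : n <> (0, 0) ->
  dot n e = 0 -> dot n p = 0 -> det e p = 0.
Proof.
  destruct n as [a b], e as [ex ey], p as [px py]; unfold dot, det; simpl.
  intros Hn He Hp.
  assert (Ha : a * (ex * py - ey * px) = py * (a * ex + b * ey) - ey * (a * px + b * py)) by ring.
  assert (Hb : b * (ex * py - ey * px) = ex * (a * px + b * py) - px * (a * ex + b * ey)) by ring.
  rewrite He, Hp in Ha, Hb.
  destruct (Req_dec a 0) as [Ha0|Ha0]; [destruct (Req_dec b 0) as [Hb0|Hb0] |].
  - subst; contradiction.
  - apply (Rmult_eq_reg_l b); lra.
  - apply (Rmult_eq_reg_l a); lra.
Qed.

Lemma det_zero_unique (z a b : R * R) : det a b <> 0 ->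
  det z a = 0 -> det z b = 0 -> z = (0, 0).
Proof.
  destruct z as [x y], a as [a1 a2], b as [b1 b2]; unfold det; simpl.
  intros Hab Ha Hb.
  assert (Hx : x * (a1 * b2 - a2 * b1) = a1 * (x * b2 - y * b1) - b1 * (x * a2 - y * a1)) by ring.
  assert (Hy : y * (a1 * b2 - a2 * b1) = a2 * (x * b2 - y * b1) - b2 * (x * a2 - y * a1)) by ring.
  rewrite Ha, Hb in Hx, Hy.
  f_equal; [apply (Rmult_eq_reg_r (a1 * b2 - a2 * b1)) | apply (Rmult_eq_reg_r (a1 * b2 - a2 * b1))]; lra.
Qed.

Lemma dot_vec_of_pdist (A B : point) (d : R) : pdist A B = d -> dot (vec A B) (vec A B) = d ^ 2.
Proof.
  unfold pdist, dot, vec; intros H; rewrite <- H, pow2_sqrt; simpl; [ring |].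
  apply Rplus_le_le_0_compat; apply pow2_ge_0.
Qed.

Lemma point_of_vec (O X : point) (w : R * R) :
  vec O X = w -> X = (fst O + fst w, snd O + snd w).
Proof. destruct O, X; unfold vec; intros <-; simpl; f_equal; ring. Qed.

Lemma vec_eq_affine (O X : point) (a b : R) (u v : R * R) :
  vec O X = (a * fst u + b * fst v, a * snd u + b * snd v) -> X = affine O a b u v.
Proof. intros H; rewrite (point_of_vec _ _ _ H); unfold affine; simpl; f_equal; ring. Qed.

(* The tangency point of externally tangent circles divides [C1C2] in the
   ratio of the radii (equality in the triangle inequality). *)
Lemma tangency_point (C1 C2 I : point) (r q : R) : 0 < r -> 0 < q ->
  pdist C1 C2 = r + q -> pdist C1 I = r -> pdist C2 I = q ->
  vec C1 I = scale (r / (r + q)) (vec C1 C2).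
Proof.
  intros Hr Hq H12 H1 H2.
  apply dot_vec_of_pdist in H12, H1, H2.
  apply cauchy_schwarz_equality; [lra | assumption | assumption |].
  assert (Hpol : dot (vec C1 I) (vec C1 C2) =
    (dot (vec C1 I) (vec C1 I) + dot (vec C1 C2) (vec C1 C2) - dot (vec C2 I) (vec C2 I)) / 2)
    by (destruct C1, C2, I; unfold dot, vec; simpl; field).
  rewrite Hpol, H12, H1, H2; field.
Qed.

(* Radii to the points of a common external tangent are parallel, with
   [C1T1 = (r/q) C2T2]: both are normal to [T1T2] and point the same way. *)
Lemma tangent_radii_parallel (C1 C2 T1 T2 : point) (r q : R) : 0 < r -> 0 < q ->
  pdist C1 T1 = r -> pdist C2 T2 = q -> T1 <> T2 ->
  dotv T1 T2 T1 C1 = 0 -> dotv T1 T2 T2 C2 = 0 -> dotv T1 C1 T2 C2 > 0 ->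
  vec C1 T1 = scale (r / q) (vec C2 T2).
Proof.
  intros Hr Hq H1 H2 Hne Ht1 Ht2 Hside.
  apply dot_vec_of_pdist in H1, H2.
  assert (Hn : vec T1 T2 <> (0, 0)).
  { destruct T1, T2; unfold vec; simpl; intros E; injection E; intros; apply Hne; f_equal; lra. }
  assert (He : dot (vec T1 T2) (vec C1 T1) = 0)
    by (revert Ht1; destruct C1, T1, T2; unfold dot, dotv, vec; simpl; intros; lra).
  assert (Hp : dot (vec T1 T2) (vec C2 T2) = 0)
    by (revert Ht2; destruct C2, T1, T2; unfold dot, dotv, vec; simpl; intros; lra).
  assert (Hpos : dot (vec C1 T1) (vec C2 T2) > 0)
    by (revert Hside; destruct C1, C2, T1, T2; unfold dot, dotv, vec; simpl; intros; lra).
  pose proof (det_zero_of_common_normal _ _ _ Hn He Hp) as Hdet.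
  pose proof (lagrange_identity (vec C1 T1) (vec C2 T2)) as Hlag.
  rewrite Hdet, H1, H2 in Hlag.
  apply cauchy_schwarz_equality; auto.
  assert (Hrq : 0 < r * q) by nra.
  nra.
Qed.

Lemma tangent_centre_inner_product (C1 C2 T1 T2 : point) (r q : R) : 0 < q ->
  pdist C2 T2 = q -> vec C1 T1 = scale (r / q) (vec C2 T2) -> dotv T1 T2 T2 C2 = 0 ->
  dot (vec C1 C2) (vec C2 T2) = q * (r - q).
Proof.
  intros Hq H2 HT1 Ht2.
  apply dot_vec_of_pdist in H2.
  replace (q * (r - q)) with ((r / q - 1) * dot (vec C2 T2) (vec C2 T2)) by (rewrite H2; field; lra).
  apply Rminus_diag_uniq; rewrite <- Ropp_0, <- Ht2.
  apply point_of_vec in HT1; subst T1.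
  destruct C1, C2, T2; unfold dot, dotv, vec, scale; simpl; ring.
Qed.

(* The lines [C1C2] and [T1T2] are not parallel ([det u p <> 0] by Lagrange's
   identity and [r <> q]); they meet at [C1 + r/(r-q) u]. *)
Lemma centre_line_meets_tangent (C1 K : point) (r q : R) (u p : R * R) :
  0 < q -> q < r -> dot u u = (r + q) ^ 2 -> dot p p = q ^ 2 -> dot u p = q * (r - q) ->
  cross (affine C1 0 (r / q) u p) (affine C1 1 1 u p) K = 0 ->
  cross C1 (affine C1 1 0 u p) K = 0 ->
  K = affine C1 (r / (r - q)) 0 u p.
Proof.
  intros Hq Hqr Hu Hp Hup HT HC.
  assert (Hdet : det u p <> 0).
  { pose proof (lagrange_identity u p) as Hlag; rewrite Hu, Hp, Hup in Hlag.
    intros E; rewrite E in Hlag.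
    assert (0 < r * q ^ 3) by (apply Rmult_lt_0_compat; [lra | apply pow_lt; lra]).
    nra. }
  set (b := (fst u + (1 - r / q) * fst p, snd u + (1 - r / q) * snd p)).
  assert (Hz : vec (affine C1 (r / (r - q)) 0 u p) K = (0, 0)).
  { apply (det_zero_unique _ u b).
    - replace (det u b) with ((1 - r / q) * det u p)
        by (unfold b, det; simpl; ring).
      apply Rmult_integral_contrapositive; split; auto.
      intros E; apply (Rmult_eq_compat_r q) in E; field_simplify in E; lra.
    - transitivity (- cross C1 (affine C1 1 0 u p) K); [| rewrite HC; ring].
      destruct C1, K, u, p; unfold det, cross, vec, affine; simpl; ring.
    - transitivity (- cross (affine C1 0 (r / q) u p) (affine C1 1 1 u p) K);
        [| rewrite HT; ring].
      unfold b; destruct C1, K, u, p; unfold det, cross, vec, affine; simpl.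
      field; lra. }
  apply point_of_vec in Hz; rewrite Hz.
  destruct C1, K, u, p; unfold vec, affine; simpl in *; f_equal; ring.
Qed.

Lemma config_normal_form (r q : R) (C1 C2 I T1 T2 M M1 M2 K : point) :
  config r q C1 C2 I T1 T2 M M1 M2 K ->
  exists u p : R * R,
    dot u u = (r + q) ^ 2 /\ dot p p = q ^ 2 /\ dot u p = q * (r - q) /\
    C2 = affine C1 1 0 u p /\ I = affine C1 (r / (r + q)) 0 u p /\
    T1 = affine C1 0 (r / q) u p /\ T2 = affine C1 1 1 u p /\
    K = affine C1 (r / (r - q)) 0 u p.
Proof.
  intros (Hq & Hqr & H12 & H1I & H2I & H1T & H2T & Hne & Ht1 & Ht2 & Hside & _ & _ & _ & HK1 & HK2).
  assert (Hr : 0 < r) by lra.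
  pose proof (tangency_point C1 C2 I r q Hr Hq H12 H1I H2I) as HI.
  pose proof (tangent_radii_parallel C1 C2 T1 T2 r q Hr Hq H1T H2T Hne Ht1 Ht2 Hside) as HT1.
  pose proof (tangent_centre_inner_product C1 C2 T1 T2 r q Hq H2T HT1 Ht2) as Hup.
  set (u := vec C1 C2) in *; set (p := vec C2 T2) in *.
  assert (EC2 : C2 = affine C1 1 0 u p)
    by (apply vec_eq_affine; unfold u; destruct C1, C2; unfold vec; simpl; f_equal; ring).
  assert (ET2 : T2 = affine C1 1 1 u p).
  { apply vec_eq_affine; unfold u, p; destruct C1, C2, T2; unfold vec; simpl; f_equal; ring. }
  assert (EI : I = affine C1 (r / (r + q)) 0 u p)
    by (apply vec_eq_affine; rewrite HI; unfold scale; f_equal; ring).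
  assert (ET1 : T1 = affine C1 0 (r / q) u p)
    by (apply vec_eq_affine; rewrite HT1; unfold scale; f_equal; ring).
  exists u, p; repeat split; auto.
  - apply dot_vec_of_pdist; assumption.
  - apply dot_vec_of_pdist; assumption.
  - apply centre_line_meets_tangent; auto.
    + apply dot_vec_of_pdist; assumption.
    + apply dot_vec_of_pdist; assumption.
    + rewrite <- ET1, <- ET2; assumption.
    + rewrite <- EC2; assumption.
Qed.

Lemma pdist_affine (O : point) (a b a' b' : R) (u v : R * R) :
  pdist (affine O a b u v) (affine O a' b' u v) =
  sqrt ((a - a') ^ 2 * dot u u + 2 * (a - a') * (b - b') * dot u v + (b - b') ^ 2 * dot v v).
Proof. unfold pdist, affine, dot; simpl; f_equal; ring. Qed.

Lemma affine_origin (O : point) (u v : R * R) : affine O 0 0 u v = O.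
Proof. destruct O; unfold affine; simpl; f_equal; ring. Qed.

Lemma pdist_origin_affine (O : point) (a b : R) (u v : R * R) :
  pdist O (affine O a b u v) = pdist (affine O 0 0 u v) (affine O a b u v).
Proof. now rewrite affine_origin. Qed.

Lemma midpoint_affine (O : point) (a b a' b' : R) (u v : R * R) :
  midpoint (affine O a b u v) (affine O a' b' u v) = affine O ((a + a') / 2) ((b + b') / 2) u v.
Proof. unfold midpoint, affine; simpl; f_equal; field. Qed.

Lemma config_distances (r q : R) (C1 C2 I T1 T2 M M1 M2 K : point) :
  config r q C1 C2 I T1 T2 M M1 M2 K ->
  pdist T1 T2 = sqrt (4 * r * q) /\ pdist I M = sqrt (r * q) /\
  pdist T1 M = sqrt (r * q) /\ pdist T2 M = sqrt (r * q) /\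
  pdist C1 M = sqrt (r * (r + q)) /\ pdist C2 M = sqrt (q * (r + q)) /\
  pdist T1 I = sqrt (4 * r ^ 2 * q / (r + q)) /\ pdist T2 I = sqrt (4 * r * q ^ 2 / (r + q)) /\
  pdist C1 M1 = sqrt (r ^ 3 / (r + q)) /\ pdist C2 M2 = sqrt (q ^ 3 / (r + q)) /\
  pdist M1 M = sqrt (r * q ^ 2 / (r + q)) /\ pdist M2 M = sqrt (r ^ 2 * q / (r + q)) /\
  pdist C2 K = sqrt (q ^ 2 * (r + q) ^ 2 / (r - q) ^ 2) /\
  pdist T2 K = sqrt (4 * r * q ^ 3 / (r - q) ^ 2) /\
  pdist C1 K = sqrt (r ^ 2 * (r + q) ^ 2 / (r - q) ^ 2) /\
  pdist T1 K = sqrt (4 * r ^ 3 * q / (r - q) ^ 2).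
Proof.
  intros Hc.
  destruct (config_normal_form _ _ _ _ _ _ _ _ _ _ _ Hc)
    as (u & p & Hu & Hp & Hup & EC2 & EI & ET1 & ET2 & EK).
  destruct Hc as (Hq & Hqr & _ & _ & _ & _ & _ & _ & _ & _ & _ & EM & EM1 & EM2 & _).
  subst C2 I T1 T2 K M M1 M2.
  rewrite !midpoint_affine.
  repeat split; rewrite ?pdist_origin_affine, pdist_affine, Hu, Hp, Hup; f_equal; field; lra.
Qed.

Definition pythagorean_lengths (d a b c : R) (C1 C2 I T1 T2 M M1 M2 K : point) : Prop :=
  pdist T1 T2 = 2 * d * a * b /\
  pdist I M = d * a * b /\ pdist T1 M = d * a * b /\ pdist T2 M = d * a * b /\
  pdist C1 M = d * a * c /\ pdist C2 M = d * b * c /\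
  pdist T1 I = 2 * d * b * a ^ 2 / c /\
  pdist T2 I = 2 * d * a * b ^ 2 / c /\
  pdist C1 M1 = d * a ^ 3 / c /\
  pdist C2 M2 = d * b ^ 3 / c /\
  pdist M1 M = d * a * b ^ 2 / c /\
  pdist M2 M = d * b * a ^ 2 / c /\
  pdist C2 K = d * b ^ 2 * c ^ 2 / (a ^ 2 - b ^ 2) /\
  pdist T2 K = 2 * d * b ^ 3 * a / (a ^ 2 - b ^ 2) /\
  pdist C1 K = d * a ^ 2 * c ^ 2 / (a ^ 2 - b ^ 2) /\
  pdist T1 K = 2 * d * a ^ 3 * b / (a ^ 2 - b ^ 2).

Lemma sqrt_of_square (x y : R) : 0 <= y -> x = y ^ 2 -> sqrt x = y.
Proof. intros Hy ->; now apply sqrt_pow2. Qed.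

(* With [r + q = d c^2] every radicand of [config_distances] is a square. *)
Lemma config_pythagorean_lengths (d a b c : R) (C1 C2 I T1 T2 M M1 M2 K : point) :
  0 < d -> 0 < b -> b < a -> 0 < c -> a ^ 2 + b ^ 2 = c ^ 2 ->
  config (d * a ^ 2) (d * b ^ 2) C1 C2 I T1 T2 M M1 M2 K ->
  pythagorean_lengths d a b c C1 C2 I T1 T2 M M1 M2 K.
Proof.
  intros Hd Hb Hba Hc Hpy Hconf.
  assert (Hsum : d * a ^ 2 + d * b ^ 2 = d * c ^ 2) by (rewrite <- Hpy; ring).
  assert (Hdiff : 0 < a ^ 2 - b ^ 2) by nra.
  pose proof (config_distances _ _ _ _ _ _ _ _ _ _ _ Hconf) as Hdist.
  rewrite Hsum in Hdist.
  destruct Hdist as (F1 & F2 & F3 & F4 & F5 & F6 & F7 & F8 & F9 & F10 & F11 & F12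
                     & F13 & F14 & F15 & F16).
  repeat split;
    [ rewrite F1 | rewrite F2 | rewrite F3 | rewrite F4 | rewrite F5 | rewrite F6
    | rewrite F7 | rewrite F8 | rewrite F9 | rewrite F10 | rewrite F11 | rewrite F12
    | rewrite F13 | rewrite F14 | rewrite F15 | rewrite F16 ];
    (apply sqrt_of_square;
     [ apply Rlt_le; repeat (apply Rdiv_lt_0_compat || apply Rmult_lt_0_compat
                             || apply pow_lt); lra
     | field; repeat split; nra ]).
Qed.

Lemma nat_pythagorean_lengths (R1 R2 d r1 r2 r3 : nat) (C1 C2 I T1 T2 M M1 M2 K : point) :
  (0 < d)%nat -> (0 < r2)%nat -> (0 < r3)%nat -> (R2 < R1)%nat ->
  (r1 ^ 2 + r2 ^ 2 = r3 ^ 2)%nat -> R1 = (d * r1 ^ 2)%nat -> R2 = (d * r2 ^ 2)%nat ->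
  config (INR R1) (INR R2) C1 C2 I T1 T2 M M1 M2 K ->
  (r2 < r1)%nat /\
  pythagorean_lengths (INR d) (INR r1) (INR r2) (INR r3) C1 C2 I T1 T2 M M1 M2 K.
Proof.
  intros Hd Hr2 Hr3 HR Hpy E1 E2 Hconf.
  assert (Hlt : (r2 < r1)%nat).
  { destruct (Nat.lt_ge_cases r2 r1) as [H | H]; auto.
    pose proof (Nat.pow_le_mono_l r1 r2 2 H); nia. }
  split; auto.
  rewrite E1, E2, !mult_INR, !pow_INR in Hconf.
  apply config_pythagorean_lengths; auto; try (apply lt_0_INR; assumption).
  - now apply lt_INR.
  - rewrite <- !pow_INR, <- plus_INR; now f_equal.
Qed.

Lemma nat_square_of_sqrt (x : nat) (n : Z) : sqrt (INR x) = IZR n ->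
  x = (Z.to_nat n * Z.to_nat n)%nat.
Proof.
  intros H.
  assert (Hn : (0 <= n)%Z) by (apply le_IZR; rewrite <- H; apply sqrt_pos).
  apply INR_eq; rewrite mult_INR.
  replace (INR (Z.to_nat n)) with (IZR n) by (rewrite INR_IZR_INZ, Z2Nat.id; auto).
  rewrite <- H, sqrt_sqrt; [reflexivity | apply pos_INR].
Qed.

Lemma is_integer_IZR (z : Z) : is_integer (IZR z).
Proof. now exists z. Qed.

Lemma is_integer_INR (n : nat) : is_integer (INR n).
Proof. rewrite INR_IZR_INZ; apply is_integer_IZR. Qed.

Lemma is_integer_mult (x y : R) : is_integer x -> is_integer y -> is_integer (x * y).
Proof. intros [m ->] [n ->]; exists (m * n)%Z; now rewrite mult_IZR. Qed.

Lemma is_rational_IZR (z : Z) : is_rational (IZR z).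
Proof. exists z, 1%Z; split; [lia | field]. Qed.

Lemma is_rational_INR (n : nat) : is_rational (INR n).
Proof. rewrite INR_IZR_INZ; apply is_rational_IZR. Qed.

Lemma is_rational_mult (x y : R) : is_rational x -> is_rational y -> is_rational (x * y).
Proof.
  intros (p & q & Hq & ->) (p' & q' & Hq' & ->).
  exists (p * p')%Z, (q * q')%Z; split; [lia |].
  rewrite !mult_IZR; field; split; now apply not_0_IZR.
Qed.

Lemma is_rational_minus (x y : R) : is_rational x -> is_rational y -> is_rational (x - y).
Proof.
  intros (p & q & Hq & ->) (p' & q' & Hq' & ->).
  exists (p * q' - p' * q)%Z, (q * q')%Z; split; [lia |].
  rewrite minus_IZR, !mult_IZR; field; split; now apply not_0_IZR.
Qed.

Lemma is_rational_div (x y : R) : y <> 0 -> is_rational x -> is_rational y ->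
  is_rational (x / y).
Proof.
  intros Hy (p & q & Hq & ->) (p' & q' & Hq' & Ey).
  assert (Hp' : p' <> 0%Z) by (intros ->; apply Hy; rewrite Ey; unfold Rdiv; ring).
  rewrite Ey; exists (p * q')%Z, (q * p')%Z; split; [lia |].
  rewrite !mult_IZR; field; repeat split; now apply not_0_IZR.
Qed.

Lemma is_rational_pow (x : R) (n : nat) : is_rational x -> is_rational (x ^ n).
Proof.
  intros Hx; induction n as [| n IH]; simpl.
  - apply is_rational_IZR.
  - now apply is_rational_mult.
Qed.

(* Reduces [is_rational e], for [e] built from naturals and integer literals by
   ring operations and division, to the nonvanishing of its denominators. *)
Ltac rational :=
  repeat first [ assumption | apply is_rational_div | apply is_rational_mult | apply is_rational_minus
               | apply is_rational_pow | apply is_rational_INR | apply is_rational_IZR ].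

Theorem mainTheorem3 (R1 R2 : nat) (C1 C2 I T1 T2 M M1 M2 K : point) :
  (0 < R2)%nat -> (R2 < R1)%nat ->
  config (INR R1) (INR R2) C1 C2 I T1 T2 M M1 M2 K ->
  ((is_integer (pdist T1 T2) /\ is_integer (pdist C1 M) /\ is_integer (pdist C2 M))
   <->
   (exists d r1 r2 r3 : nat,
      (0 < d)%nat /\ (0 < r1)%nat /\ (0 < r2)%nat /\ (0 < r3)%nat /\
      Nat.gcd r1 r2 = 1%nat /\ (r1 ^ 2 + r2 ^ 2 = r3 ^ 2)%nat /\
      R1 = (d * r1 ^ 2)%nat /\ R2 = (d * r2 ^ 2)%nat))
  /\
  (forall d r1 r2 r3 : nat,
      (0 < d)%nat -> (0 < r1)%nat -> (0 < r2)%nat -> (0 < r3)%nat ->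
      Nat.gcd r1 r2 = 1%nat -> (r1 ^ 2 + r2 ^ 2 = r3 ^ 2)%nat ->
      R1 = (d * r1 ^ 2)%nat -> R2 = (d * r2 ^ 2)%nat ->
      let dd := INR d in let a := INR r1 in let b := INR r2 in let c := INR r3 in
      (r2 < r1)%nat /\
      pdist T1 T2 = 2 * dd * a * b /\
      pdist I M = dd * a * b /\ pdist T1 M = dd * a * b /\ pdist T2 M = dd * a * b /\
      pdist C1 M = dd * a * c /\ pdist C2 M = dd * b * c /\
      pdist T1 I = 2 * dd * b * a ^ 2 / c /\
      pdist T2 I = 2 * dd * a * b ^ 2 / c /\
      pdist C1 M1 = dd * a ^ 3 / c /\
      pdist C2 M2 = dd * b ^ 3 / c /\
      pdist M1 M = dd * a * b ^ 2 / c /\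
      pdist M2 M = dd * b * a ^ 2 / c /\
      pdist C2 K = dd * b ^ 2 * c ^ 2 / (a ^ 2 - b ^ 2) /\
      pdist T2 K = 2 * dd * b ^ 3 * a / (a ^ 2 - b ^ 2) /\
      pdist C1 K = dd * a ^ 2 * c ^ 2 / (a ^ 2 - b ^ 2) /\
      pdist T1 K = 2 * dd * a ^ 3 * b / (a ^ 2 - b ^ 2) /\
      is_rational (pdist T1 I) /\ is_rational (pdist T2 I) /\
      is_rational (pdist C1 M1) /\ is_rational (pdist C2 M2) /\
      is_rational (pdist M1 M) /\ is_rational (pdist M2 M) /\
      is_rational (pdist C2 K) /\ is_rational (pdist T2 K) /\
      is_rational (pdist C1 K) /\ is_rational (pdist T1 K)).
Proof.
  intros HR2 HR12 Hconf.
  split; [split |].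
  - (* integral lengths force [4 R1 R2] and [R1 (R1 + R2)] to be squares *)
    intros [[n Hn] [[m Hm] _]].
    destruct (config_distances _ _ _ _ _ _ _ _ _ _ _ Hconf) as (HT & _ & _ & _ & HM & _).
    rewrite HT in Hn; rewrite HM in Hm.
    apply (pythagorean_radii R1 R2 (Z.to_nat n) (Z.to_nat m)); try lia;
      apply nat_square_of_sqrt; [rewrite <- Hn | rewrite <- Hm];
      f_equal; rewrite ?mult_INR, ?plus_INR; simpl; ring.
  - (* conversely the three lengths are [2 d r1 r2], [d r1 r3], [d r2 r3] *)
    intros (d & r1 & r2 & r3 & Hd & _ & Hr2 & Hr3 & _ & Hpy & E1 & E2).
    destruct (nat_pythagorean_lengths R1 R2 d r1 r2 r3 C1 C2 I T1 T2 M M1 M2 K)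
      as (_ & HT & _ & _ & _ & HC1 & HC2 & _); auto.
    rewrite HT, HC1, HC2; repeat split;
      repeat (apply is_integer_mult || apply is_integer_INR || apply is_integer_IZR).
  -
    intros d r1 r2 r3 Hd _ Hr2 Hr3 _ Hpy E1 E2 dd a b c.
    destruct (nat_pythagorean_lengths R1 R2 d r1 r2 r3 C1 C2 I T1 T2 M M1 M2 K)
      as (Hlt & F1 & F2 & F3 & F4 & F5 & F6 & F7 & F8 & F9 & F10 & F11 & F12
          & F13 & F14 & F15 & F16); auto.
    assert (Hc_nz : c <> 0) by (apply not_0_INR; lia).
    assert (Hab_nz : a ^ 2 - b ^ 2 <> 0).
    { apply Rminus_eq_contra; unfold a, b; rewrite <- !pow_INR; apply not_INR.
      pose proof (Nat.pow_lt_mono_l r2 r1 2 ltac:(lia) Hlt); lia. }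
    repeat split; try assumption;
      rewrite ?F7, ?F8, ?F9, ?F10, ?F11, ?F12, ?F13, ?F14, ?F15, ?F16; rational.
Qed.
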